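(* Let $f,g$ be complex-valued functions of two variables with $f\perp g$. Let $\{a_i\}_{i\in\mathbb{Z}},\{b_i\}_{i\in\mathbb{Z}},\{c_i\}_{i\in\mathbb{Z}},\{d_i\}_{i\in\mathbb{Z}}$ be sequences, and let $m,n\ge 0$ be integers such that $f(a_j,c_j),f(a_j,d_j),g(b_j,c_j),g(b_j,d_j)$ are all nonzero for $-n\le j\le m$. Then $$\sum_{k=-n}^{m} f(a_k,b_k)g(c_k,d_k)\frac{\prod_{j=1}^{k-1}f(a_j,c_j)}{\prod_{j=1}^{k}f(a_j,d_j)}\frac{\prod_{j=1}^{k-1}g(b_j,d_j)}{\prod_{j=1}^{k}g(b_j,c_j)} =\frac{\prod_{j=1}^{m}f(a_j,c_j)}{\prod_{j=1}^{m}f(a_j,d_j)}\frac{\prod_{j=1}^{m}g(b_j,d_j)}{\prod_{j=1}^{m}g(b_j,c_j)}-\frac{\prod_{j=-n}^{0}f(a_j,d_j)}{\prod_{j=-n}^{0}f(a_j,c_j)}\frac{\prod_{j=-n}^{0}g(b_j,c_j)}{\prod_{j=-n}^{0}g(b_j,d_j)}.$$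
   Context: $f\perp g$ means $g(u,v)f(z,w)-g(u,w)f(z,v)+g(v,w)f(z,u)=0$ for all $u,v,w,z$. Products over integer ranges follow the convention: $\prod_{j=k}^{m}A_j=A_kA_{k+1}\cdots A_m$ if $m\ge k$; $=1$ if $m=k-1$; $=(A_{m+1}A_{m+2}\cdots A_{k-1})^{-1}$ if $m\le k-2$. *)

From mathcomp Require Import all_boot all_order all_algebra.
From mathcomp Require Import reals.
From mathcomp.real_closed Require Import complex.
Set Implicit Arguments. Unset Strict Implicit. Unset Printing Implicit Defensive.
Import Order.TTheory GRing.Theory Num.Theory.
Local Open Scope ring_scope.

Definition perp (F : pzRingType) (f g : F -> F -> F) : Prop :=
  forall u v w z : F, g u v * f z w - g u w * f z v + g v w * f z u = 0.

(* Product over an integer range with the paper's convention: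
   zprod A k m = A_k ... A_m        if m >= k,
               = 1                   if m = k - 1,
               = (A_(m+1) ... A_(k-1))^-1 if m <= k - 2. *)
Definition zprod (F : unitRingType) (A : int -> F) (k m : int) : F :=
  if k - 1 <= m then \prod_(i < absz (m - k + 1)%R) A (k + i%:Z)
  else (\prod_(i < absz (k - 1 - m)%R) A (m + 1 + i%:Z))^-1.

(* Sum over the integer range lo..hi (lo <= hi + 1 expected) *)
Definition zsum (F : nmodType) (A : int -> F) (lo hi : int) : F :=
  \sum_(i < absz (hi - lo + 1)%R) A (lo + i%:Z).

(* With (u, v, w, z) = (b_k, c_k, d_k, a_k), the relation f ⊥ g reads
   f(a_k,b_k) g(c_k,d_k) = f(a_k,c_k) g(b_k,d_k) - f(a_k,d_k) g(b_k,c_k).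
   Hence the k-th summand is P_k - P_(k-1), where P_k is the product of ratios
   appearing in the first term of the right-hand side with m replaced by k, and
   the sum telescopes to P_m - P_(-n-1).  By the convention for products over
   reversed ranges, P_(-n-1) is the second term of the right-hand side. *)
From mathcomp Require Import all_boot all_order all_algebra.
From mathcomp Require Import reals.
From mathcomp.real_closed Require Import complex.
From mathcomp Require Import zify ring.
Set Implicit Arguments. Unset Strict Implicit. Unset Printing Implicit Defensive.
Import Order.TTheory GRing.Theory Num.Theory.
Local Open Scope ring_scope.

Lemma perp_expand (F : comPzRingType) (f g : F -> F -> F) (u v w z : F) :
  perp f g -> f z u * g v w = f z v * g u w - f z w * g u v.
Proof.
move=> perp_fg; apply/eqP; rewrite -subr_eq0 -(perp_fg u v w z); apply/eqP.
ring.
Qed.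

Lemma zprod_nat (F : unitRingType) (A : int -> F) (lo : int) (p : nat) :
  zprod A lo (lo + p%:Z - 1) = \prod_(i < p) A (lo + i%:Z).
Proof.
rewrite /zprod ifT; last by lia.
by rewrite (_ : absz _ = p) //; lia.
Qed.

Lemma zprod_negz (F : unitRingType) (A : int -> F) (lo : int) (p : nat) :
  zprod A lo (lo + Negz p - 1) = (\prod_(i < p.+1) A (lo + Negz p + i%:Z))^-1.
Proof.
rewrite /zprod ifF; last by lia.
rewrite (_ : absz _ = p.+1); last by lia.
by rewrite (_ : lo + Negz p - 1 + 1 = lo + Negz p) //; lia.
Qed.

Lemma zprod_recr (F : fieldType) (A : int -> F) (lo k : int) :
  A k != 0 -> zprod A lo k = zprod A lo (k - 1) * A k.
Proof.
have [t ->] : exists t : int, k = lo + t - 1 by exists (k - lo + 1); lia.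
case: t => [[|p]|p] Ak.
- rewrite zprod_nat big_ord0 (_ : lo + 0%:Z - 1 - 1 = lo + Negz 0 - 1); last lia.
  rewrite zprod_negz big_ord1 (_ : lo + Negz 0 + 0%:Z = lo + 0%:Z - 1); last lia.
  by rewrite mulVf.
- rewrite (_ : lo + p.+1%:Z - 1 - 1 = lo + p%:Z - 1); last lia.
  by rewrite !zprod_nat big_ord_recr /=; congr (_ * A _); lia.
- rewrite (_ : lo + Negz p - 1 - 1 = lo + Negz p.+1 - 1); last lia.
  rewrite !zprod_negz [in RHS]big_ord_recl invfM mulrAC.
  rewrite (_ : lo + Negz p.+1 + 0%:Z = lo + Negz p - 1); last lia.
  rewrite mulVf // mul1r; congr (_^-1); apply: eq_bigr => i _.
  by rewrite lift0; congr (A _); lia.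
Qed.

Lemma zprod_rev (F : unitRingType) (A : int -> F) (k m : int) :
  m < k -> zprod A k m = (zprod A (m + 1) (k - 1))^-1.
Proof.
move=> lt_mk; rewrite {2}/zprod ifT; last by lia.
rewrite /zprod; case: ifP => [le_km|_].
  rewrite (_ : absz (m - k + 1) = 0%N); last by lia.
  by rewrite (_ : absz (k - 1 - (m + 1) + 1) = 0%N) ?big_ord0 ?invr1 //; lia.
by rewrite (_ : k - 1 - (m + 1) + 1 = k - 1 - m) //; lia.
Qed.

Lemma eq_zsum (V : nmodType) (T1 T2 : int -> V) (lo hi : int) :
  lo <= hi + 1 -> (forall k, lo <= k <= hi -> T1 k = T2 k) ->
  zsum T1 lo hi = zsum T2 lo hi.
Proof.
move=> le_lo_hi eqT; apply: eq_bigr => i _; apply: eqT.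
by have := ltn_ord i; lia.
Qed.

Lemma zsum_telescope (V : zmodType) (P : int -> V) (lo hi : int) :
  lo <= hi + 1 -> zsum (fun k => P k - P (k - 1)) lo hi = P hi - P (lo - 1).
Proof.
move=> le_lo_hi.
have [N ->] : exists N : nat, hi = lo + N%:Z - 1.
  by exists (absz (hi - lo + 1)); lia.
rewrite /zsum (_ : absz _ = N); last by lia.
elim: N => [|N IH]; first by rewrite big_ord0 addr0 subrr.
rewrite big_ord_recr /= IH (_ : lo + N.+1%:Z - 1 = lo + N%:Z); last by lia.
by rewrite addrC addrA subrK.
Qed.

Definition zratio (F : unitRingType) (p q r s : int -> F) (lo k : int) : F :=
  zprod p lo k / zprod q lo k * (zprod r lo k / zprod s lo k).

Lemma zratio_step (F : fieldType) (p q r s : int -> F) (lo k : int) :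
  p k != 0 -> q k != 0 -> r k != 0 -> s k != 0 ->
  (p k * r k - q k * s k)
    * (zprod p lo (k - 1) / zprod q lo k) * (zprod r lo (k - 1) / zprod s lo k)
  = zratio p q r s lo k - zratio p q r s lo (k - 1).
Proof.
move=> pk_neq0 qk_neq0 rk_neq0 sk_neq0.
rewrite /zratio !(zprod_recr lo (k := k)) // !invfM.
move: (zprod p lo _) (zprod q lo _)^-1 (zprod r lo _) (zprod s lo _)^-1.
by move=> P Qinv R Sinv; field; apply/andP.
Qed.

Lemma zratio_lt (F : comUnitRingType) (p q r s : int -> F) (lo k : int) :
  k < lo -> zratio p q r s lo k = zratio q p s r (k + 1) (lo - 1).
Proof.
move=> lt_k_lo; rewrite /zratio !(zprod_rev _ lt_k_lo).
by rewrite !invrK ![_^-1 * _]mulrC.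
Qed.

Theorem theorem3p1 (R : realType) (f g : R[i] -> R[i] -> R[i])
    (a b c d : int -> R[i]) (m n : nat) :
  perp f g ->
  (forall j : int, - (n%:Z) <= j <= m%:Z ->
     [/\ f (a j) (c j) != 0, f (a j) (d j) != 0,
         g (b j) (c j) != 0 & g (b j) (d j) != 0]) ->
  zsum (fun k : int =>
          f (a k) (b k) * g (c k) (d k)
          * (zprod (fun j => f (a j) (c j)) 1 (k - 1)
             / zprod (fun j => f (a j) (d j)) 1 k)
          * (zprod (fun j => g (b j) (d j)) 1 (k - 1)
             / zprod (fun j => g (b j) (c j)) 1 k))
       (- (n%:Z)) (m%:Z)
  = (zprod (fun j => f (a j) (c j)) 1 m%:Z
       / zprod (fun j => f (a j) (d j)) 1 m%:Z)
    * (zprod (fun j => g (b j) (d j)) 1 m%:Z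
       / zprod (fun j => g (b j) (c j)) 1 m%:Z)
    - (zprod (fun j => f (a j) (d j)) (- (n%:Z)) 0
       / zprod (fun j => f (a j) (c j)) (- (n%:Z)) 0)
      * (zprod (fun j => g (b j) (c j)) (- (n%:Z)) 0
       / zprod (fun j => g (b j) (d j)) (- (n%:Z)) 0).
Proof.
move=> perp_fg nonzero.
set fac := fun j => f (a j) (c j); set fad := fun j => f (a j) (d j).
set gbc := fun j => g (b j) (c j); set gbd := fun j => g (b j) (d j).
have le_range : - (n%:Z) <= m%:Z + 1 by lia.
have lt_lo : - (n%:Z) - 1 < 1 by lia.
rewrite (eq_zsum _ (T2 := fun k => zratio fac fad gbd gbc 1 k
                                  - zratio fac fad gbd gbc 1 (k - 1))) //.
  rewrite zsum_telescope // (zratio_lt _ _ _ _ lt_lo).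
  by rewrite (_ : - (n%:Z) - 1 + 1 = - (n%:Z)) ?subrr //; lia.
move=> k /nonzero[fac_neq0 fad_neq0 gbc_neq0 gbd_neq0].
by rewrite (perp_expand _ _ _ _ perp_fg) zratio_step.
Qed.
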